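(* Let $M\in\mathcal{L}(\ell_2,\ell_1)$ be defined by $(Mx)_k=x_k/k$ for $k\in\mathbb{N}$, let $d\ge0$ be an integer, and let $U\in\mathcal{L}_M$ be a $d$-diagonal operator. Then $\|\{U\}_M\|_{\mathcal{L}(\ell_2)}\le(2d+1)^{3/2}\|U\|_{\mathcal{L}(\ell_1)}$; i.e. $U\in\mathcal{L}_M^C$ with $C=\sqrt{(2d+1)^3}$.
   Context: $\ell_p$ is indexed by $\mathbb{N}$. An operator $U\in\mathcal{L}(\ell_1)$ is identified with its infinite matrix $(u_{nm})$, $(Ux)_n=\sum_m u_{nm}x_m$. $U$ is $d$-diagonal if $u_{nm}=0$ whenever $|n-m|>d$. $\mathcal{L}_M\subset\mathcal{L}(\ell_1)$ is the set of $U$ with $\operatorname{Im}(UM)\subset\operatorname{Im}M$; for $U\in\mathcal{L}_M$, $\{U\}_M:=M^{-1}UM\in\mathcal{L}(\ell_2)$ (matrix entries $\frac{n}{m}u_{nm}$). $\mathcal{L}_M^C$ is the set of $U\in\mathcal{L}_M$ with $\|\{U\}_M\|_{\mathcal{L}(\ell_2)}\le C\|U\|_{\mathcal{L}(\ell_1)}$. *)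

From HB Require Import structures.
From mathcomp Require Import all_boot all_order all_algebra.
From mathcomp Require Import all_classical all_reals all_analysis.
Set Implicit Arguments. Unset Strict Implicit. Unset Printing Implicit Defensive.
Import Order.TTheory GRing.Theory Num.Theory.
Local Open Scope classical_set_scope.
Local Open Scope ring_scope.

(* Sequences indexed by N = {1,2,...}; the Rocq index k : nat stands for k+1. *)
Section Defs.
Variable R : realType.
Definition seqR := nat -> R.

Definition enorm1 (x : seqR) : \bar R := (\sum_(0 <= k <oo) (`|x k|)%:E)%E.
Definition esqnorm2 (x : seqR) : \bar R := (\sum_(0 <= k <oo) ((x k) ^+ 2)%:E)%E.

Definition in_l1 (x : seqR) : Prop := (enorm1 x < +oo)%E.
Definition in_l2 (x : seqR) : Prop := (esqnorm2 x < +oo)%E.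

Definition norm1 (x : seqR) : R := fine (enorm1 x).
Definition norm2 (x : seqR) : R := Num.sqrt (fine (esqnorm2 x)).

(* U is a bounded linear operator on l1 (its values off l1 are irrelevant) *)
Definition is_bounded_op_l1 (U : seqR -> seqR) : Prop :=
  [/\ (forall x, in_l1 x -> in_l1 (U x)),
      (forall (a : R) x y, in_l1 x -> in_l1 y ->
          U (fun k => a * x k + y k) = (fun k => a * U x k + U y k)) &
      exists c : R, forall x, in_l1 x -> norm1 (U x) <= c * norm1 x].

Definition opnorm1 (U : seqR -> seqR) : R :=
  sup [set norm1 (U x) | x in [set x | in_l1 x /\ norm1 x <= 1]].

Definition unitv (m : nat) : seqR := fun k => if k == m then 1 else 0.

Definition entry (U : seqR -> seqR) (n m : nat) : R := U (unitv m) n.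

Definition d_diagonal (d : nat) (U : seqR -> seqR) : Prop :=
  forall n m : nat, (m + d < n)%N || (n + d < m)%N -> entry U n m = 0.

(* M : l2 -> l1, (Mx)_k = x_k / k   (k = index + 1) *)
Definition Mop (x : seqR) : seqR := fun k => x k / (k.+1)%:R.

Definition in_LM (U : seqR -> seqR) : Prop :=
  forall x, in_l2 x -> exists y, in_l2 y /\ U (Mop x) = Mop y.

(* {U}_M = M^{-1} U M  (M is injective) *)
Definition conjM (U : seqR -> seqR) (x : seqR) : seqR :=
  fun k => (k.+1)%:R * U (Mop x) k.
End Defs.

From mathcomp Require Import all_boot all_order all_algebra.
From mathcomp Require Import all_classical all_reals all_analysis.
From mathcomp.algebra_tactics Require Import ring lra.
From mathcomp Require Import zify.
Set Implicit Arguments.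
Unset Strict Implicit.
Unset Printing Implicit Defensive.
Import Order.TTheory GRing.Theory Num.Theory.
Local Open Scope ring_scope.

(* The matrix of {U}_M is a_nm = (n/m) u_nm.  Since U is d-diagonal, a_nm
   vanishes unless |n - m| <= d, and then n/m <= d+1.  The m-th column of
   (u_nm) is U e_m, so its l1-norm, and hence each entry, is at most ||U||.
   Thus the rows of (a_nm) have l1-norm at most (2d+1)(d+1)||U|| and its
   columns at most (d+1)||U||, and the Schur test bounds the l2 operator norm
   by the geometric mean sqrt((2d+1)(d+1)^2) ||U|| <= (2d+1)^(3/2) ||U||. *)

Section SequenceSpaces.
Context {R : realType}.
Implicit Types x y : seqR R.

Lemma enorm1_ge0 x : (0 <= enorm1 x)%E.
Proof. by apply: nneseries_ge0 => k _ _; rewrite lee_fin. Qed.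

Lemma esqnorm2_ge0 x : (0 <= esqnorm2 x)%E.
Proof. by apply: nneseries_ge0 => k _ _; rewrite lee_fin sqr_ge0. Qed.

Lemma norm1_ge0 x : 0 <= norm1 x.
Proof. exact/fine_ge0/enorm1_ge0. Qed.

Lemma norm1E x : in_l1 x -> enorm1 x = (norm1 x)%:E.
Proof. by move=> x1; rewrite /norm1 fineK// ge0_fin_numE// enorm1_ge0. Qed.

Lemma esqnorm2E x : in_l2 x -> esqnorm2 x = (fine (esqnorm2 x))%:E.
Proof. by move=> x2; rewrite fineK// ge0_fin_numE// esqnorm2_ge0. Qed.

Lemma le_norm1 x n : in_l1 x -> `|x n| <= norm1 x.
Proof.
move=> x1; rewrite -lee_fin -norm1E//.
apply: le_trans (nneseries_lim_ge n.+1 _); last by move=> k _ _; rewrite lee_fin.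
by rewrite big_nat_recr//= leeDr// sume_ge0// => k _; rewrite lee_fin.
Qed.

Lemma enorm1_unitv m : enorm1 (unitv R m) = 1%E.
Proof.
rewrite /enorm1 (@nneseriesD1 _ _ m xpredT)// /unitv eqxx normr1.
by rewrite eseries0 ?adde0// => k _ /andP[_ /negbTE ->]; rewrite normr0.
Qed.

Lemma in_l1_unitv m : in_l1 (unitv R m).
Proof. by rewrite /in_l1 enorm1_unitv ltry. Qed.

Definition tailv y N : seqR R := fun k => if (N <= k)%N then y k else 0.

Lemma in_l1_tailv N y : in_l1 y -> in_l1 (tailv y N).
Proof.
apply: le_lt_trans; apply: lee_nneseries => [k _ _|k _]; rewrite lee_fin//.
by rewrite /tailv; case: ifP; rewrite ?normr0.
Qed.

Lemma tailvS y N : tailv y N = (fun k => y N * unitv R N k + tailv y N.+1 k).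
Proof.
apply/funext => k; rewrite /tailv /unitv.
by case: ltngtP => [|_|<-]; rewrite ?mulr0 ?mulr1 ?add0r ?addr0.
Qed.

Lemma norm1_tailv_small y eps : in_l1 y -> 0 < eps ->
  \forall N \near \oo%classic, norm1 (tailv y N) < eps.
Proof.
move=> y1 eps0.
have /fine_cvgP[_ /cvgrPdist_lt/(_ eps eps0)] :=
  @nneseries_tail_cvg R (fun k => (`|y k|)%:E) xpredT y1
    (fun k _ => ltac:(by rewrite lee_fin)).
apply: filterS => N; rewrite sub0r normrN ger0_norm ?fine_ge0 ?nneseries_ge0//.
congr (_ < _); congr fine.
rewrite /enorm1 (nneseries_split 0 N); last by move=> k _; rewrite lee_fin.
rewrite add0n big_nat_cond big1 ?add0e; last first.
  by move=> k /andP[/andP[_ kN] _]; rewrite /tailv leqNgt kN normr0.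
by apply/congr_lim/funext => n; apply: eq_big_nat => k /andP[Nk _]; rewrite /tailv Nk.
Qed.

(* The tails of y tend to 0 in l1, so continuity of U kills all columns but the first K. *)
Lemma bounded_op_l1_coord (U : seqR R -> seqR R) y n K :
  is_bounded_op_l1 U -> in_l1 y -> (forall m, (K <= m)%N -> entry U n m = 0) ->
  U y n = \sum_(m < K) y m * entry U n m.
Proof.
move=> [U1 Ulin [c Uc]] y1 UK.
have split_tail N : U y n = \sum_(m < N) y m * entry U n m + U (tailv y N) n.
  elim: N => [|N IH]; first by rewrite big_ord0 add0r.
  rewrite IH big_ord_recr -addrA {1}(tailvS y N) Ulin//.
  - exact: in_l1_unitv.
  - exact: in_l1_tailv.
have tail_le N : `|U (tailv y N) n| <= (`|c| + 1) * norm1 (tailv y N).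
  have tail1 := in_l1_tailv N y1.
  apply: le_trans (le_norm1 n (U1 _ tail1)) _.
  apply: le_trans (Uc _ tail1) _.
  by rewrite ler_wpM2r ?norm1_ge0// (le_trans (ler_norm c))// lerDl.
apply/eqP; rewrite -subr_eq0 -normr_le0; apply/ler_addgt0Pr => e e0.
have c0 : 0 < `|c| + 1 by rewrite ltr_wpDl.
have [N0 _ hN] := norm1_tailv_small y1 (divr_gt0 e0 c0).
have tailN := hN (maxn K N0) (leq_maxr _ _).
rewrite (split_tail (maxn K N0)) add0r.
have -> : \sum_(m < maxn K N0) y m * entry U n m = \sum_(m < K) y m * entry U n m.
  rewrite -(subnKC (leq_maxl K N0)) big_split_ord /= [X in _ + X]big1 ?addr0//.
  by move=> i _; rewrite UK ?mulr0// leq_addr.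
rewrite addrC addKr (le_trans (tail_le _))// mulrC -ler_pdivlMr//; exact: ltW tailN.
Qed.

Lemma sum_inv_sqr_le N : \sum_(k < N) ((k.+1)%:R ^+ 2)^-1 <= 2 - 2 / (N.+1)%:R :> R.
Proof.
elim: N => [|N IH]; first by rewrite big_ord0 divr1 subrr.
rewrite big_ord_recr /= (le_trans (lerD IH (lexx _)))// -[(N.+2)%:R]natr1.
set a : R := (N.+1)%:R; have a1 : 1 <= a by rewrite ler1n.
have a0 : a != 0 by rewrite gt_eqF// (lt_le_trans ltr01).
have a10 : a + 1 != 0 by rewrite gt_eqF// ltr_wpDl// (le_trans ler01).
rewrite -subr_ge0; clearbody a.
have -> : 2 - 2 / (a + 1) - (2 - 2 / a + (a ^+ 2)^-1) = (a - 1) / (a ^+ 2 * (a + 1)).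
  by field; rewrite a0 a10.
by rewrite divr_ge0 ?subr_ge0// mulr_ge0 ?sqr_ge0//; lra.
Qed.

Lemma series_inv_sqr_le : (\sum_(0 <= k <oo) (((k.+1)%:R ^+ 2)^-1 : R)%:E <= 2%:E)%E.
Proof.
apply: lime_le; first by apply: is_cvg_nneseries => k _ _; rewrite lee_fin invr_ge0 sqr_ge0.
apply: nearW => N; rewrite sumEFin lee_fin big_mkord (le_trans (sum_inv_sqr_le N))//.
by rewrite lerBlDr lerDl divr_ge0.
Qed.

(* |x_k|/k <= x_k^2 + 1/k^2 reduces M(l2) in l1 to the convergence of sum 1/k^2. *)
Lemma in_l1_Mop x : in_l2 x -> in_l1 (Mop x).
Proof.
move=> x2; rewrite /in_l1 /enorm1.
apply: (@le_lt_trans _ _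
    (\sum_(0 <= k <oo) ((x k ^+ 2)%:E + (((k.+1)%:R ^+ 2)^-1)%:E))%E).
  apply: lee_nneseries => [k _ _|k _]; first by rewrite lee_fin.
  rewrite -EFinD lee_fin /Mop normrM normfV (ger0_norm (ler0n _ _)) -exprVn.
  rewrite -real_normK ?num_real//.
  set a := `|x k|; set b := (k.+1)%:R^-1.
  have a0 : 0 <= a by exact: normr_ge0.
  have b0 : 0 <= b by rewrite invr_ge0.
  nra.
rewrite nneseriesD => [|k _ _|k _ _]; last 2 first.
- by rewrite lee_fin sqr_ge0.
- by rewrite lee_fin invr_ge0 sqr_ge0.
by rewrite lte_add_pinfty// (le_lt_trans series_inv_sqr_le) ?ltry.
Qed.

Lemma sqr_sum_mul_le K (a z : nat -> R) :
  (\sum_(m < K) a m * z m) ^+ 2 <=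
  (\sum_(m < K) `|a m|) * \sum_(m < K) `|a m| * z m ^+ 2.
Proof.
set A := \sum_(m < K) `|a m|; set S := \sum_(m < K) `|a m| * z m ^+ 2.
set P := \sum_(m < K) `|a m| * `|z m|.
have sumP : `|\sum_(m < K) a m * z m| <= P.
  by apply: le_trans (ler_norm_sum _ _ _) _; apply: ler_sum => i _; rewrite normrM.
have P2 : P * P <= A * S.
  have AS : A * S = \sum_(i < K) \sum_(j < K) `|a i| * (`|a j| * z j ^+ 2).
    by rewrite /A big_distrl; apply: eq_bigr => i _; rewrite /S big_distrr.
  have SA : A * S = \sum_(i < K) \sum_(j < K) (`|a i| * z i ^+ 2) * `|a j|.
    by rewrite mulrC /S big_distrl; apply: eq_bigr => i _; rewrite /A big_distrr.
  have PP : P * P = \sum_(i < K) \sum_(j < K) (`|a i| * `|z i|) * (`|a j| * `|z j|).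
    by rewrite {1}/P big_distrl; apply: eq_bigr => i _; rewrite /P big_distrr.
  rewrite -(@ler_pM2r _ 2)// !mulrDr !mulr1 {1}AS SA -big_split PP -big_split /=.
  apply: ler_sum => i _; rewrite -!big_split; apply: ler_sum => j _ /=.
  rewrite -[z i ^+ 2]real_normK ?num_real// -[z j ^+ 2]real_normK ?num_real//.
  have := mulr_ge0 (mulr_ge0 (normr_ge0 (a i)) (normr_ge0 (a j)))
    (sqr_ge0 (`|z i| - `|z j|)); nra.
by rewrite -real_normK ?num_real// (le_trans _ P2)// ler_pM.
Qed.

(* Row n only involves the columns m < K n, which keeps the row sums finite. *)
Lemma schur_test (a : nat -> nat -> R) (K : nat -> nat) (r c : R) x :
  (forall n, \sum_(m < K n) `|a n m| <= r) ->
  (forall m, (\sum_(0 <= n <oo) (`|a n m|)%:E <= c%:E)%E) ->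
  (esqnorm2 (fun n => (\sum_(m < K n) a n m * x m)%R) <= (r * c)%:E * esqnorm2 x)%E.
Proof.
move=> row col.
have r0 : 0 <= r := le_trans (sumr_ge0 _ (fun m _ => normr_ge0 _)) (row 0%N).
pose T n m := `|a n m| * x m ^+ 2.
have T0 n m : (0 <= (T n m)%:E)%E by rewrite lee_fin mulr_ge0 ?sqr_ge0.
have rowT n : (((\sum_(m < K n) a n m * x m) ^+ 2)%R%:E <=
    r%:E * \sum_(0 <= m <oo) (T n m)%:E)%E.
  have sq_le : (\sum_(m < K n) a n m * x m) ^+ 2 <= r * \sum_(m < K n) T n m.
    rewrite (le_trans (sqr_sum_mul_le _ _ _))// ler_wpM2r//.
    by apply: sumr_ge0 => m _; rewrite mulr_ge0 ?sqr_ge0.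
  apply: (@le_trans _ _ (r * \sum_(m < K n) T n m)%R%:E); first by rewrite lee_fin.
  rewrite EFinM lee_wpmul2l ?lee_fin// -(big_mkord xpredT (T n)) -sumEFin.
  exact: nneseries_lim_ge.
have colT m : (\sum_(0 <= n <oo) (T n m)%:E <= (c * x m ^+ 2)%:E)%E.
  under eq_eseriesr do rewrite /T EFinM muleC.
  by rewrite nneseriesZl// (EFinM c) [leRHS]muleC lee_wpmul2l ?lee_fin ?sqr_ge0.
apply: (@le_trans _ _ (\sum_(0 <= n <oo) r%:E * \sum_(0 <= m <oo) (T n m)%:E)%E).
  by apply: lee_nneseries => [n _ _|n _]; rewrite ?lee_fin ?sqr_ge0.
rewrite nneseriesZl => [|n _]; last exact: nneseries_ge0.
rewrite nneseries_interchange// EFinM -muleA lee_wpmul2l ?lee_fin//.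
rewrite /esqnorm2 -nneseriesZl => [|m _]; last by rewrite lee_fin sqr_ge0.
apply: lee_nneseries => [m _ _|m _]; last by rewrite -EFinM.
exact: nneseries_ge0.
Qed.

Lemma schur_test_norm2 (a : nat -> nat -> R) (K : nat -> nat) (r c : R) x :
  (forall n, \sum_(m < K n) `|a n m| <= r) ->
  (forall m, (\sum_(0 <= n <oo) (`|a n m|)%:E <= c%:E)%E) -> in_l2 x ->
  norm2 (fun n => \sum_(m < K n) a n m * x m) <= Num.sqrt (r * c) * norm2 x.
Proof.
move=> row col x2; set y := fun n => _.
have := schur_test x row col; rewrite (esqnorm2E x2) -EFinM => yle.
have y2 : in_l2 y by apply: le_lt_trans yle _; rewrite ltry.
move: yle; rewrite (esqnorm2E y2) lee_fin => yle.
rewrite /norm2 -sqrtrM ?ler_wsqrtr// mulr_ge0//.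
- exact: le_trans (sumr_ge0 _ (fun m _ => normr_ge0 _)) (row 0%N).
- by rewrite -lee_fin (le_trans _ (col 0%N))// nneseries_ge0.
Qed.

End SequenceSpaces.

Section BoundedOperator.
Context {R : realType}.
Variable U : seqR R -> seqR R.
Hypothesis U_bounded : is_bounded_op_l1 U.

Lemma norm1_col_le_opnorm1 m : norm1 (U (unitv R m)) <= opnorm1 U.
Proof.
have [_ _ [c Uc]] := U_bounded; apply: ub_le_sup; last first.
  by exists (unitv R m) => //; split; [exact: in_l1_unitv | rewrite /norm1 enorm1_unitv].
exists `|c| => _ [z [z1 z_le1] <-]; apply: le_trans (Uc z z1) _.
apply: le_trans (_ : `|c| * norm1 z <= _).
  by rewrite ler_wpM2r ?norm1_ge0 ?ler_norm.
by rewrite -[leRHS]mulr1 ler_wpM2l.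
Qed.

Lemma esum_col_le_opnorm1 m :
  (\sum_(0 <= n <oo) (`|entry U n m|)%:E <= (opnorm1 U)%:E)%E.
Proof.
have [U1 _ _] := U_bounded.
by have := norm1_col_le_opnorm1 m; rewrite -lee_fin -(norm1E (U1 _ (in_l1_unitv m))).
Qed.

Lemma entry_le_opnorm1 n m : `|entry U n m| <= opnorm1 U.
Proof.
have [U1 _ _] := U_bounded.
exact: le_trans (le_norm1 n (U1 _ (in_l1_unitv m))) (norm1_col_le_opnorm1 m).
Qed.

Lemma opnorm1_ge0 : 0 <= opnorm1 U.
Proof. exact: le_trans (normr_ge0 _) (entry_le_opnorm1 0 0). Qed.

(* In the 1-based indexing of the paper this is n/m u_nm. *)
Definition conjM_entry n m : R := (n.+1)%:R / (m.+1)%:R * entry U n m.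

Variable d : nat.
Hypothesis U_diag : d_diagonal d U.

Lemma conjM_expansion x : in_l2 x ->
  conjM U x = fun n => \sum_(m < n + d + 1) conjM_entry n m * x m.
Proof.
move=> x2; apply/funext => n; rewrite /conjM.
rewrite (bounded_op_l1_coord (K := n + d + 1) U_bounded (in_l1_Mop x2)).
  by rewrite big_distrr; apply: eq_bigr => m _; rewrite /conjM_entry /Mop /=; ring.
by move=> m nm; apply: U_diag; apply/orP; right; rewrite -addn1.
Qed.

Lemma conjM_entry_le n m : `|conjM_entry n m| <= (d.+1)%:R * `|entry U n m|.
Proof.
have [nm|mn] := leqP n (m + d); last first.
  by rewrite /conjM_entry U_diag ?mn// !(mulr0, normr0).
rewrite /conjM_entry normrM ger0_norm ?divr_ge0// ler_wpM2r//.
by rewrite ler_pdivrMr// -natrM ler_nat; nia.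
Qed.

Lemma conjM_row_sum n :
  \sum_(m < n + d + 1) `|conjM_entry n m| <= (2 * d + 1)%N%:R * ((d.+1)%:R * opnorm1 U).
Proof.
rewrite -(big_mkord xpredT (fun m => `|conjM_entry n m|)).
rewrite (@big_cat_nat _ _ _ (n - d)) ?leq0n //=; last by lia.
rewrite big_nat_cond big1 ?add0r => [|m /andP[/andP[_ mnd] _]]; last first.
  by rewrite /conjM_entry U_diag ?(mulr0, normr0)//; apply/orP; left; lia.
have entry_le m : `|conjM_entry n m| <= (d.+1)%:R * opnorm1 U.
  by rewrite (le_trans (conjM_entry_le n m))// ler_wpM2l// entry_le_opnorm1.
apply: le_trans (ler_sum_nat (fun m _ => entry_le m)) _.
rewrite sumr_const_nat -(mulr_natl ((d.+1)%:R * _)).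
by rewrite ler_wpM2r ?mulr_ge0 ?opnorm1_ge0// ler_nat; lia.
Qed.

Lemma conjM_col_sum m :
  (\sum_(0 <= n <oo) (`|conjM_entry n m|)%:E <= ((d.+1)%:R * opnorm1 U)%:E)%E.
Proof.
apply: le_trans (_ : \sum_(0 <= n <oo) ((d.+1)%:R)%:E * (`|entry U n m|)%:E <= _)%E.
  apply: lee_nneseries => [n _ _|n _]; first by rewrite lee_fin.
  by rewrite -EFinM lee_fin conjM_entry_le.
by rewrite nneseriesZl// EFinM lee_wpmul2l ?lee_fin ?esum_col_le_opnorm1.
Qed.

End BoundedOperator.

Theorem lemma6 (R : realType) (d : nat) (U : seqR R -> seqR R) :
  is_bounded_op_l1 U -> d_diagonal d U -> in_LM U ->
  forall x : seqR R, in_l2 x ->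
    norm2 (conjM U x) <= Num.sqrt (((2 * d + 1) ^ 3)%N%:R) * opnorm1 U * norm2 x.
Proof.
move=> U_bounded U_diag _ x x2.
rewrite (conjM_expansion U_bounded U_diag x2).
apply: le_trans (schur_test_norm2 (conjM_row_sum U_bounded U_diag)
  (conjM_col_sum U_bounded U_diag) x2) _.
rewrite ler_wpM2r ?sqrtr_ge0//.
set B := opnorm1 U; have B0 : 0 <= B := opnorm1_ge0 U_bounded.
have -> : (2 * d + 1)%N%:R * ((d.+1)%:R * B) * ((d.+1)%:R * B) =
    ((2 * d + 1) * d.+1 * d.+1)%N%:R * B ^+ 2 by rewrite !natrM; ring.
rewrite sqrtrM ?ler0n// sqrtr_sqr ger0_norm// ler_wpM2r// ler_wsqrtr// ler_nat.
nia.
Qed.
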